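(* Let $A$ be a noetherian UFD, let $(a,b)\in A^2$, and let $A'=A[X]/(aX-b)$, where $A[X]$ is a polynomial ring in one variable over $A$. Assume: (i) $a,b$ are nonzero and relatively prime (i.e. $aA\cap bA=abA$), and $a$ is either a unit or a product of prime elements of $A$; (ii) $pA+bA$ is a prime ideal of $A$ for every prime element $p$ of $A$ such that $a\in pA$ and $pA+bA\neq A$. Then $A'$ is a noetherian UFD. *)

From HB Require Import structures.
From mathcomp Require Import all_boot all_order all_algebra.
Set Implicit Arguments. Unset Strict Implicit. Unset Printing Implicit Defensive.
Import GRing.Theory.
Local Open Scope ring_scope.

Section RingNotions.
Variable R : comNzRingType.

Definition unitP (x : R) : Prop := exists y : R, x * y = 1.

Definition divides (x y : R) : Prop := exists z : R, y = x * z.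

Definition is_domain : Prop :=
  (1 : R) <> 0 /\ forall x y : R, x * y = 0 -> x = 0 \/ y = 0.

Definition is_ideal (I : R -> Prop) : Prop :=
  [/\ I 0, (forall x y, I x -> I y -> I (x + y)) & (forall r x, I x -> I (r * x))].

Definition gen_ideal (s : seq R) (x : R) : Prop :=
  exists c : 'I_(size s) -> R, x = \sum_(i < size s) c i * s`_i.

Definition noetherian : Prop :=
  forall I : R -> Prop, is_ideal I -> exists s : seq R, forall x, I x <-> gen_ideal s x.

Definition prime_ideal (P : R -> Prop) : Prop :=
  [/\ is_ideal P, ~ P 1 & forall x y, P (x * y) -> P x \/ P y].

Definition prime_elt (p : R) : Prop :=
  [/\ p <> 0, ~ unitP p & forall x y, divides p (x * y) -> divides p x \/ divides p y].

Definition irreducible_elt (p : R) : Prop :=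
  [/\ p <> 0, ~ unitP p & forall x y, p = x * y -> unitP x \/ unitP y].

Definition associated (x y : R) : Prop := exists u : R, unitP u /\ y = u * x.

Definition UFD : Prop :=
  [/\ is_domain,
      (forall x : R, x <> 0 -> ~ unitP x ->
         exists s : seq R, (forall p, p \in s -> irreducible_elt p) /\
                           x = \prod_(p <- s) p)
    & (forall s t : seq R,
         (forall p, p \in s -> irreducible_elt p) ->
         (forall p, p \in t -> irreducible_elt p) ->
         \prod_(p <- s) p = \prod_(p <- t) p ->
         exists t' : seq R, perm_eq t' t /\ size s = size t' /\
           forall i, (i < size s)%N -> associated (nth 0 s i) (nth 0 t' i))].

End RingNotions.

(* The ring B = A[X]/(aX - b) is noetherian by Hilbert's basis theorem.  Because a and
   b are coprime, a is a non-zero-divisor of B; as aX = b, B then sits inside A[1/a], so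
   it is a domain and it remains to show that its irreducible elements are prime.  By
   (ii) and Gauss's lemma every prime factor p of a becomes a unit or a prime of B, so a
   is a product of primes of B.  An irreducible element pi of B without prime divisors
   satisfies a^n pi = c for some c in A; factoring c into primes of A, some prime factor
   r of c not dividing a agrees with pi up to factors dividing a power of a, and the
   primality of r in A transfers to pi (a concrete form of Nagata's criterion). *)

From HB Require Import structures.
From mathcomp Require Import all_boot all_order all_algebra.
From mathcomp Require Import zify ring.
From Stdlib Require Import Classical ClassicalEpsilon.
Set Implicit Arguments. Unset Strict Implicit. Unset Printing Implicit Defensive.
Import GRing.Theory.
Local Open Scope ring_scope.

Section Divisibility.
Variable R : comNzRingType.
Implicit Types x y z u : R.

Lemma divides_refl x : divides x x. Proof. by exists 1; rewrite mulr1. Qed.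

Lemma divides_trans x y z : divides x y -> divides y z -> divides x z.
Proof. by move=> [u ->] [v ->]; exists (u * v); rewrite mulrA. Qed.

Lemma divides_mulIl x y : divides x (x * y). Proof. by exists y. Qed.

Lemma divides_mulIr x y : divides y (x * y). Proof. by exists x; rewrite mulrC. Qed.

Lemma divides_mull x y z : divides x y -> divides x (z * y).
Proof. by move=> [u ->]; exists (z * u); rewrite mulrCA. Qed.

Lemma divides_mul x y z t : divides x y -> divides z t -> divides (x * z) (y * t).
Proof. by move=> [u ->] [v ->]; exists (u * v); rewrite mulrACA. Qed.

Lemma unitP1 : unitP (1 : R). Proof. by exists 1; rewrite mulr1. Qed.

Lemma unitPM x y : unitP x -> unitP y -> unitP (x * y).
Proof. by move=> [u hu] [v hv]; exists (u * v); rewrite mulrACA hu hv mulr1. Qed.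

Lemma unitP_divides1 x : unitP x <-> divides x 1.
Proof. by split=> [[u hu]|[u hu]]; exists u. Qed.

Lemma unitP_divides x y : unitP x -> divides x y.
Proof. by move=> [u hu]; exists (u * y); rewrite mulrA hu mul1r. Qed.

Lemma divides_unitP x y : divides x y -> unitP y -> unitP x.
Proof. by move=> [u ->] [v hv]; exists (u * v); rewrite mulrA. Qed.

Lemma divides_prod_mem (s : seq R) x : x \in s -> divides x (\prod_(q <- s) q).
Proof.
elim: s => // y s IH; rewrite inE big_cons => /predU1P [->|/IH]; last exact: divides_mull.
exact: divides_mulIl.
Qed.

Lemma divides_prod_exp (s : seq R) x : (forall y, y \in s -> divides y x) ->
  divides (\prod_(y <- s) y) (x ^+ size s).
Proof.
elim: s => [|y s IH] sx; first by rewrite big_nil expr0; apply: divides_refl.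
rewrite big_cons exprS; apply: divides_mul; first by apply/sx/mem_head.
by apply: IH => z zs; apply: sx; rewrite inE zs orbT.
Qed.

Lemma prime_divides_prod p (s : seq R) : prime_elt p -> divides p (\prod_(q <- s) q) ->
  exists2 q, q \in s & divides p q.
Proof.
move=> pp; elim: s => [|y s IH]; rewrite ?big_nil ?big_cons.
  by move=> /unitP_divides1 pu; case: pp => _ /(_ pu).
case: (pp) => _ _ /[apply] -[|/IH [q qs pq]]; first by exists y; rewrite ?mem_head.
by exists q; rewrite // inE qs orbT.
Qed.

Lemma prime_divides_exp p x n : prime_elt p -> divides p (x ^+ n) -> divides p x.
Proof.
move=> pp; elim: n => [|n IH]; last by rewrite exprS; case: (pp) => _ _ /[apply] -[|/IH].
by rewrite expr0 => /unitP_divides1 pu; case: pp => _ /(_ pu).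
Qed.

End Divisibility.

Section Ideals.
Variable R : comNzRingType.
Implicit Types (x y : R) (s t : seq R) (J : R -> Prop).

Lemma ideal0 J : is_ideal J -> J 0. Proof. by case. Qed.

Lemma idealD J x y : is_ideal J -> J x -> J y -> J (x + y).
Proof. by case=> _ + _; apply. Qed.

Lemma idealMl J r x : is_ideal J -> J x -> J (r * x). Proof. by case=> _ _; apply. Qed.

Lemma idealMr J r x : is_ideal J -> J x -> J (x * r).
Proof. by rewrite mulrC; apply: idealMl. Qed.

Lemma idealB J x y : is_ideal J -> J x -> J y -> J (x - y).
Proof. by move=> hJ hx hy; rewrite -mulN1r; apply: idealD => //; apply: idealMl. Qed.

Lemma ideal_sum J (I : Type) (r : seq I) (P : pred I) (F : I -> R) :
  is_ideal J -> (forall i, P i -> J (F i)) -> J (\sum_(i <- r | P i) F i).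
Proof. by case=> J0 JD _ h; apply: big_ind. Qed.

Lemma divides_ideal x : is_ideal (divides x).
Proof.
split; first by exists 0; rewrite mulr0.
  by move=> y z [u ->] [v ->]; exists (u + v); rewrite mulrDr.
by move=> r y; apply: divides_mull.
Qed.

Lemma gen_ideal_ideal s : is_ideal (gen_ideal s).
Proof.
split.
- by exists (fun _ => 0); rewrite big1 // => i _; rewrite mul0r.
- move=> x y [c1 ->] [c2 ->]; exists (fun i => c1 i + c2 i).
  by rewrite -big_split; apply: eq_bigr => i _; rewrite mulrDl.
- move=> r x [c ->]; exists (fun i => r * c i).
  by rewrite mulr_sumr; apply: eq_bigr => i _; rewrite mulrA.
Qed.

Lemma gen_ideal_mem s x : x \in s -> gen_ideal s x.
Proof.
move=> xs; have xi : (index x s < size s)%N by rewrite index_mem.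
exists (fun j => (j == Ordinal xi)%:R).
rewrite (bigD1 (Ordinal xi)) //= eqxx mul1r big1 ?addr0 ?nth_index //.
by move=> j /negbTE ->; rewrite mul0r.
Qed.

Lemma gen_ideal_min s J : is_ideal J -> (forall x, x \in s -> J x) ->
  forall x, gen_ideal s x -> J x.
Proof.
by move=> hJ hs x [c ->]; apply: ideal_sum => // i _; apply: idealMl => //; apply/hs/mem_nth.
Qed.

Lemma gen_ideal_catl s t x : gen_ideal s x -> gen_ideal (s ++ t) x.
Proof.
apply: gen_ideal_min => [|y ys]; first exact: gen_ideal_ideal.
by apply/gen_ideal_mem; rewrite mem_cat ys.
Qed.

Lemma gen_ideal_catr s t x : gen_ideal t x -> gen_ideal (s ++ t) x.
Proof.
apply: gen_ideal_min => [|y ys]; first exact: gen_ideal_ideal.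
by apply/gen_ideal_mem; rewrite mem_cat ys orbT.
Qed.

Lemma noetherian_chain_stationary (J : nat -> R -> Prop) : noetherian R ->
  (forall n, is_ideal (J n)) -> (forall n m x, (n <= m)%N -> J n x -> J m x) ->
  exists N, forall n x, J n x -> J N x.
Proof.
move=> noeth hJ Jmono.
pose U x := exists n, J n x.
have hU : is_ideal U.
  split; first by exists 0%N; apply: ideal0.
    move=> x y [n hx] [m hy]; exists (maxn n m).
    by apply: idealD; [|apply: Jmono hx|apply: Jmono hy]; rewrite ?leq_maxl ?leq_maxr.
  by move=> r x [n hx]; exists n; apply: idealMl.
have [s hs] := noeth U hU.
have [N hN] : exists N, forall x, x \in s -> J N x.
  have : forall x, x \in s -> U x by move=> x xs; apply/hs/gen_ideal_mem.
  elim: s {hs} => [|y s IH] hs; first by exists 0%N.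
  have [|N hN] := IH; first by move=> x xs; apply: hs; rewrite inE xs orbT.
  have [n hy] := hs y (mem_head _ _).
  exists (maxn n N) => x; rewrite inE => /predU1P [->|xs].
    by apply: Jmono hy; rewrite leq_maxl.
  by apply: Jmono (hN _ xs); rewrite leq_maxr.
by exists N => n x hx; apply: (gen_ideal_min (hJ N) hN); apply/hs; exists n.
Qed.

End Ideals.

Section Domain.
Variable R : comNzRingType.
Hypothesis dom : is_domain R.
Implicit Types x y z u p q : R.

Lemma domain_mul_eq0 x y : x * y = 0 -> x = 0 \/ y = 0.
Proof. by case: dom => _; apply. Qed.

Lemma domain_mul_neq0 x y : x <> 0 -> y <> 0 -> x * y <> 0.
Proof. by move=> x0 y0 /domain_mul_eq0 []. Qed.

Lemma unitP_neq0 x : unitP x -> x <> 0.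
Proof. by case: dom => n01 _ [u xu] x0; apply: n01; rewrite -xu x0 mul0r. Qed.

Lemma domain_mulI x y z : x <> 0 -> x * y = x * z -> y = z.
Proof.
move=> x0 e; have : x * (y - z) = 0 by rewrite mulrBr e subrr.
by case/domain_mul_eq0 => // /eqP; rewrite subr_eq0 => /eqP.
Qed.

Lemma unit_mul_prime u p : unitP u -> prime_elt p -> prime_elt (u * p).
Proof.
move=> [v uv] [p0 pu pp]; split.
- by apply: domain_mul_neq0 => //; apply: unitP_neq0; exists v.
- by move=> /(divides_unitP (divides_mulIr u p)).
- move=> x y [w e].
  have : divides p (x * y) by exists (u * w); rewrite e mulrA [p * u]mulrC.
  have up z : divides p z -> divides (u * p) z.
    by move=> [t ->]; exists (v * t); rewrite mulrACA uv mul1r.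
  by case/pp => ?; [left|right]; apply: up.
Qed.

Lemma unit_mul_irreducible u p : unitP u -> irreducible_elt p -> irreducible_elt (u * p).
Proof.
move=> [v uv] [p0 pu pi]; split.
- by apply: domain_mul_neq0 => //; apply: unitP_neq0; exists v.
- by move=> /(divides_unitP (divides_mulIr u p)).
- move=> x y e.
  have : p = (v * x) * y by rewrite -mulrA -e mulrA [v * u]mulrC uv mul1r.
  by case/pi => [/(divides_unitP (divides_mulIr v x))|]; [left|right].
Qed.

Lemma irreducible_prime_divisor p q : irreducible_elt p -> prime_elt q -> divides q p ->
  prime_elt p.
Proof.
move=> [_ _ pi] qp [w e]; case: (pi _ _ e) => [qu|wu]; first by case: qp => _ /(_ qu).
by rewrite e mulrC; apply: unit_mul_prime.
Qed.

Inductive prime_product : R -> Prop :=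
| prime_product_unit u : unitP u -> prime_product u
| prime_product_cons p d : prime_elt p -> prime_product d -> prime_product (p * d).

Lemma prime_product_unitM u d : unitP u -> prime_product d -> prime_product (u * d).
Proof.
move=> uu; elim=> [v vu|p d' pp _ IH]; first by apply: prime_product_unit; apply: unitPM.
by rewrite mulrCA; apply: prime_product_cons.
Qed.

Lemma prime_productM d e : prime_product d -> prime_product e -> prime_product (d * e).
Proof.
move=> + pe; elim=> [u uu|p d' pp _ IH]; first exact: prime_product_unitM.
by rewrite -mulrA; apply: prime_product_cons.
Qed.

Lemma prime_product_exp d n : prime_product d -> prime_product (d ^+ n).
Proof.
move=> pd; elim: n => [|n IH]; last by rewrite exprS; apply: prime_productM.
by rewrite expr0; apply: prime_product_unit; apply: unitP1.
Qed.

Lemma prime_product_prod (T : eqType) (s : seq T) (F : T -> R) :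
  (forall i, i \in s -> unitP (F i) \/ prime_elt (F i)) ->
  prime_product (\prod_(i <- s) F i).
Proof.
elim: s => [|i s IH] hs; first by rewrite big_nil; apply: prime_product_unit; apply: unitP1.
have {}IH : prime_product (\prod_(j <- s) F j).
  by apply: IH => j js; apply: hs; rewrite inE js orbT.
rewrite big_cons; case: (hs i (mem_head _ _)) => [ui|pi].
  exact: prime_product_unitM.
exact: prime_product_cons.
Qed.

Lemma prime_product_irreducible_split d p g h : prime_product d -> irreducible_elt p ->
  d * p = g * h -> divides g d \/ divides h d.
Proof.
move=> pd [_ _ pi]; elim: pd g h => [u [v uv]|q d' qp _ IH] g h e.
  have : p = (v * g) * h by rewrite -mulrA -e mulrA [v * u]mulrC uv mul1r.
  case/pi => [vgu|hu]; [left|right]; apply: unitP_divides => //.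
  exact: divides_unitP (divides_mulIr v g) vgu.
have q0 : q <> 0 by case: qp.
have : divides q (g * h) by rewrite -e -mulrA; apply: divides_mulIl.
case: (qp) => _ _ /[apply] -[[g' eg]|[h' eh]].
  have : d' * p = g' * h by apply: (domain_mulI q0); rewrite mulrA e eg mulrA.
  case/IH => [gd|hd]; last by right; apply: divides_mull.
  by left; rewrite eg; apply: divides_mul (divides_refl q) gd.
have : d' * p = g * h' by apply: (domain_mulI q0); rewrite mulrA e eh mulrCA.
case/IH => [gd|hd]; first by left; apply: divides_mull.
by right; rewrite eh; apply: divides_mul (divides_refl q) hd.
Qed.

Lemma prime_product_cancel d x y : prime_product d ->
  (forall q, prime_elt q -> ~ divides q x) -> divides x (d * y) -> divides x y.
Proof.
move=> pd nq; elim: pd y => [u [v uv]|q d' qp _ IH] y [w e].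
  by exists (v * w); rewrite mulrCA -e mulrA [v * u]mulrC uv mul1r.
have q0 : q <> 0 by case: qp.
have : divides q (x * w) by rewrite -e -mulrA; apply: divides_mulIl.
case: (qp) => _ _ /[apply] -[/(nq _ qp)//|[w' ew]].
by apply: IH; exists w'; apply: (domain_mulI q0); rewrite mulrA e ew mulrCA.
Qed.

Definition has_factorization x :=
  exists s : seq R, (forall p, p \in s -> irreducible_elt p) /\ x = \prod_(p <- s) p.

Lemma has_factorizationM x y :
  has_factorization x -> has_factorization y -> has_factorization (x * y).
Proof.
move=> [s [si ->]] [t [ti ->]]; exists (s ++ t); rewrite big_cat; split=> // p.
by rewrite mem_cat => /orP [/si|/ti].
Qed.

Lemma irreducible_has_factorization p : irreducible_elt p -> has_factorization p.
Proof. by exists [:: p]; rewrite big_seq1; split=> // q /[!inE] /eqP ->. Qed.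

Lemma unfactored_proper_divisor x : x <> 0 -> ~ unitP x -> ~ has_factorization x ->
  exists y, [/\ y <> 0, ~ unitP y, ~ has_factorization y, divides y x & ~ divides x y].
Proof.
move=> x0 xu xf.
have [y [z [e yu zu]]] : exists y z, [/\ x = y * z, ~ unitP y & ~ unitP z].
  apply: NNPP => nyz; apply/xf/irreducible_has_factorization; split=> // y z e.
  by apply: NNPP => /not_or_and [yu zu]; apply: nyz; exists y, z.
have y0 : y <> 0 by move=> y0; apply: x0; rewrite e y0 mul0r.
have z0 : z <> 0 by move=> z0; apply: x0; rewrite e z0 mulr0.
have proper (v w : R) : v <> 0 -> ~ unitP w -> ~ divides (v * w) v.
  move=> v0 wu [t et]; apply: wu; exists t; apply: (domain_mulI v0).
  by rewrite mulr1 mulrA -et.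
case: (classic (has_factorization y)) => [yf|nyf].
  exists z; split=> //; first by move=> zf; apply: xf; rewrite e; apply: has_factorizationM.
    by rewrite e; apply: divides_mulIr.
  by rewrite e mulrC; apply: proper.
by exists y; split=> //; rewrite e; [apply: divides_mulIl|apply: proper].
Qed.

(* An infinite chain of proper divisors among unfactored elements contradicts the
   ascending chain condition on the principal ideals they generate. *)
Lemma noetherian_has_factorization : noetherian R ->
  forall x, x <> 0 -> ~ unitP x -> has_factorization x.
Proof.
move=> noeth x x0 xu; apply: NNPP => xf.
pose bad (y : R) := [/\ y <> 0, ~ unitP y & ~ has_factorization y].
have [g hg] : exists g : R -> R, forall y, bad y ->
    [/\ bad (g y), divides (g y) y & ~ divides y (g y)].
  apply: (ClassicalEpsilon.choice
    (fun y z => bad y -> [/\ bad z, divides z y & ~ divides y z])) => y.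
  case: (classic (bad y)) => [[y0 yu yf]|nb]; last by exists y.
  by have [z [? ? ? ? ?]] := unfactored_proper_divisor y0 yu yf; exists z.
pose v n := iter n g x.
have vbad n : bad (v n) by elim: n => [|n IH]; [|case: (hg _ IH)].
have vdiv n m : (n <= m)%N -> divides (v m) (v n).
  move=> nm; rewrite -(subnK nm); elim: (m - n)%N => [|k IH]; first exact: divides_refl.
  by rewrite addSn; have [_ dv _] := hg _ (vbad (k + n)%N); apply: divides_trans dv IH.
have [N hN] := noetherian_chain_stationary (J := fun n => divides (v n)) noeth
  (fun n => divides_ideal (v n)) (fun n m y nm => divides_trans (vdiv n m nm)).
by case: (hg _ (vbad N)) => _ _; apply; apply: (hN N.+1); apply: divides_refl.
Qed.

Section IrreducibleIsPrime.
Hypothesis irreducible_prime : forall p, irreducible_elt p -> prime_elt p.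

Lemma factorization_unique s t u :
  (forall p, p \in s -> irreducible_elt p) -> (forall p, p \in t -> irreducible_elt p) ->
  unitP u -> \prod_(p <- s) p = u * \prod_(p <- t) p ->
  exists t' : seq R, perm_eq t' t /\ size s = size t' /\
    forall i, (i < size s)%N -> associated (nth 0 s i) (nth 0 t' i).
Proof.
elim: s t u => [|p s IH] t u si ti uu e.
  case: t ti e => [|q t] ti e; first by exists [::].
  have [_ qu _] := ti q (mem_head _ _).
  exfalso; apply: qu; exists (u * \prod_(r <- t) r).
  by rewrite mulrCA; move: e; rewrite big_nil big_cons.
have pp := irreducible_prime (si p (mem_head _ _)).
have : divides p (u * \prod_(r <- t) r) by rewrite -e big_cons; apply: divides_mulIl.
case: (pp) => p0 pu /[apply] -[/divides_unitP /(_ uu) //|/(prime_divides_prod pp)].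
move=> [q qt [w qw]].
have [_ _ /(_ _ _ qw) [//|wu]] := ti q qt.
have tq := perm_to_rem qt.
have e' : \prod_(r <- s) r = (u * w) * \prod_(r <- rem q t) r.
  apply: (domain_mulI p0); move: e; rewrite big_cons => ->.
  by rewrite (perm_big _ tq) big_cons qw !mulrA [u * p]mulrC.
have [|r|t'' [tt'' [st'' a'']]] := IH (rem q t) (u * w) _ _ (unitPM uu wu) e'.
- by move=> r rs; apply: si; rewrite inE rs orbT.
- by move/mem_rem; apply: ti.
exists (q :: t''); split; last split.
- by rewrite (permPr tq) perm_cons.
- by rewrite /= st''.
- case=> [|i] /= hi; last exact: a''.
  by exists w; split; rewrite // qw mulrC.
Qed.

Lemma irreducible_prime_UFD : noetherian R -> UFD R.
Proof.
move=> noeth; split=> //; first exact: noetherian_has_factorization.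
move=> s t si ti e; apply: (factorization_unique (u := 1)) => //; first exact: unitP1.
by rewrite mul1r.
Qed.

End IrreducibleIsPrime.

Lemma UFD_factorization : UFD R -> forall x, x <> 0 ->
  exists u s, [/\ unitP u, forall p, p \in s -> irreducible_elt p & x = u * \prod_(p <- s) p].
Proof.
move=> [_ fact _] x x0; case: (classic (unitP x)) => [xu|xu].
  by exists x, [::]; rewrite big_nil mulr1.
have [s [si ->]] := fact x x0 xu; exists 1, s; split=> //; [exact: unitP1|by rewrite mul1r].
Qed.

Lemma UFD_irreducible_prime : UFD R -> forall p, irreducible_elt p -> prime_elt p.
Proof.
move=> ufd p pirr; have [p0 pu _] := pirr; split=> // x y [z e].
have [->|x0] := classic (x = 0); first by left; exists 0; rewrite mulr0.
have [->|y0] := classic (y = 0); first by right; exists 0; rewrite mulr0.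
have z0 : z <> 0 by move=> z0; apply: (domain_mul_neq0 x0 y0); rewrite e z0 mulr0.
have [ux [sx [uxu sxi ex]]] := UFD_factorization ufd x0.
have [uy [sy [uyu syi ey]]] := UFD_factorization ufd y0.
have [uz [sz [uzu szi ez]]] := UFD_factorization ufd z0.
have [v uv] := unitPM uxu uyu.
have [_ _ ufd_uniq] := ufd.
have [|q||t' [tt' [st' a']]] := ufd_uniq ((v * uz * p) :: sz) (sx ++ sy).
- move=> q /[!inE] /predU1P [->|/szi //]; apply: unit_mul_irreducible => //.
  by apply: unitPM => //; exists (ux * uy); rewrite mulrC.
- by rewrite mem_cat => /orP [/sxi|/syi].
- rewrite big_cons big_cat /=; transitivity (v * (p * z)); first by rewrite ez; ring.
  by rewrite -e ex ey -[RHS]mul1r -uv; ring.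
have [r rs [w [_ er]]] : exists2 r, r \in sx ++ sy & associated (v * uz * p) r.
  have t'0 : (0 < size t')%N by rewrite -st'.
  by exists (nth 0 t' 0); [rewrite -(perm_mem tt') mem_nth|apply: (a' 0%N)].
have pr : divides p r by rewrite er mulrA; apply: divides_mulIr.
move: rs; rewrite mem_cat ex ey => /orP [] /divides_prod_mem /(divides_trans pr) ?;
  [left|right]; exact: divides_mull.
Qed.

End Domain.

Lemma noetherian_rmorph_surj (R S : comNzRingType) (g : {rmorphism R -> S}) :
  noetherian R -> (forall y, exists x, g x = y) -> noetherian S.
Proof.
move=> noeth gsurj J hJ.
have preim_ideal (K : S -> Prop) : is_ideal K -> is_ideal (fun x => K (g x)).
  case=> K0 KD KM; split; first by rewrite rmorph0.
    by move=> x y Kx Ky; rewrite rmorphD; apply: KD.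
  by move=> r x Kx; rewrite rmorphM; apply: KM.
have [s hs] := noeth _ (preim_ideal _ hJ).
exists (map g s) => y; split.
  have [x <-] := gsurj y; move/hs.
  apply: (gen_ideal_min (J := fun x => gen_ideal (map g s) (g x))).
    exact/preim_ideal/gen_ideal_ideal.
  by move=> z zs; apply/gen_ideal_mem/map_f.
by apply: gen_ideal_min => // z /mapP [x xs ->]; apply/hs/gen_ideal_mem.
Qed.

Section HilbertBasis.
Variable A : comNzRingType.
Hypothesis noeth : noetherian A.
Implicit Types (J I : {poly A} -> Prop) (c : A).

Definition lead_ideal J n c := exists q, [/\ J q, (size q <= n.+1)%N & q`_n = c].

Lemma lead_ideal_ideal J n : is_ideal J -> is_ideal (lead_ideal J n).
Proof.
move=> hJ; split.
- by exists 0; rewrite size_poly0 coef0; split=> //; apply: ideal0.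
- move=> x y [q1 [J1 s1 c1]] [q2 [J2 s2 c2]]; exists (q1 + q2); split.
  + exact: idealD.
  + by apply: leq_trans (size_polyD _ _) _; rewrite geq_max s1 s2.
  + by rewrite coefD c1 c2.
- move=> r x [q [Jq sq cq]]; exists (r%:P * q); split; first exact: idealMl.
    by rewrite mul_polyC; apply: leq_trans (size_scale_leq _ _) _.
  by rewrite coefCM cq.
Qed.

Lemma lead_idealS J n m c :
  is_ideal J -> (n <= m)%N -> lead_ideal J n c -> lead_ideal J m c.
Proof.
move=> hJ nm [q [Jq sq cq]]; exists (q * 'X^(m - n)); split; first exact: idealMr.
  apply/leq_sizeP => j mj; rewrite coefMXn; case: ltnP => // jmn.
  by move/leq_sizeP: sq; apply; lia.
by rewrite coefMXn ltnNge leq_subr subKn.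
Qed.

Lemma lead_ideal_sub J J' n c :
  (forall q, J q -> J' q) -> lead_ideal J n c -> lead_ideal J' n c.
Proof. by move=> JJ' [q [Jq sq cq]]; exists q; split=> //; apply: JJ'. Qed.

Section Ideal.
Variable I : {poly A} -> Prop.
Hypothesis hI : is_ideal I.

Lemma lead_ideal_witness n : exists H, (forall h, h \in H -> I h) /\
  forall c, lead_ideal I n c -> lead_ideal (gen_ideal H) n c.
Proof.
have [t ht] := noeth (lead_ideal_ideal n hI).
suff [H [HI Ht]] : exists H, (forall h, h \in H -> I h) /\
    forall c, c \in t -> lead_ideal (gen_ideal H) n c.
  exists H; split=> // c /ht; apply: gen_ideal_min => //.
  exact/lead_ideal_ideal/gen_ideal_ideal.
have : forall c, c \in t -> lead_ideal I n c by move=> c ct; apply/ht/gen_ideal_mem.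
elim: t {ht} => [|c t IH] tI; first by exists [::].
have [|H [HI Ht]] := IH; first by move=> d dt; apply: tI; rewrite inE dt orbT.
have [q [Iq sq cq]] := tI c (mem_head _ _).
exists (q :: H); split; first by move=> h /[!inE] /predU1P [->|/HI].
move=> d /[!inE] /predU1P [->|dt].
  by exists q; split=> //; apply/gen_ideal_mem/mem_head.
by apply: lead_ideal_sub (Ht _ dt) => x; apply: (gen_ideal_catr [:: q]).
Qed.

Lemma lead_ideals_witness N : exists G, (forall h, h \in G -> I h) /\
  forall n c, (n <= N)%N -> lead_ideal I n c -> lead_ideal (gen_ideal G) n c.
Proof.
elim: N => [|N [G [GI GN]]].
  have [H [HI H0]] := lead_ideal_witness 0.
  by exists H; split=> // n c; rewrite leqn0 => /eqP ->; apply: H0.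
have [H [HI HN]] := lead_ideal_witness N.+1.
exists (G ++ H); split; first by move=> h; rewrite mem_cat => /orP [/GI|/HI].
move=> n c; rewrite leq_eqVlt => /predU1P [->|nN] Ic.
  by apply: lead_ideal_sub (HN _ Ic) => x; apply: gen_ideal_catr.
by apply: lead_ideal_sub (GN _ _ nN Ic) => x; apply: gen_ideal_catl.
Qed.

(* Once the ideals of leading coefficients stabilise at degree N, generators of them
   up to degree N let one lower the degree of any element of I. *)
Lemma poly_ideal_finitely_generated : exists G, forall q, I q <-> gen_ideal G q.
Proof.
have [N leadN] := noetherian_chain_stationary noeth (fun n => lead_ideal_ideal n hI)
  (fun n m c => lead_idealS hI).
have [G [GI GN]] := lead_ideals_witness N.
have hG := gen_ideal_ideal G.
exists G => q; split; last exact: gen_ideal_min.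
move: {2}(size q) (leqnn (size q)) => m; elim: m q => [|m IH] q sq Iq.
  by move: sq; rewrite leqn0 size_poly_eq0 => /eqP ->; apply: ideal0.
have [g [Gg sg gq]] : lead_ideal (gen_ideal G) (minn m N) q`_m.
  apply: GN; first exact: geq_minr.
  have Iqm : lead_ideal I m q`_m by exists q.
  by case: leqP => // _; apply: leadN Iqm.
have hm : (minn m N <= m)%N := geq_minl m N.
pose h := g * 'X^(m - minn m N).
have Gh : gen_ideal G h by apply: idealMr.
have hqm : h`_m = q`_m by rewrite coefMXn ltnNge leq_subr subKn.
have sh : (size h <= m.+1)%N.
  apply/leq_sizeP => j mj; rewrite coefMXn; case: ltnP => // jmn.
  by move/leq_sizeP: sg; apply; lia.
have Gqh : gen_ideal G (q - h).
  apply: IH; last exact: idealB hI Iq (gen_ideal_min hI GI Gh).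
  apply/leq_sizeP => j; rewrite leq_eqVlt => /predU1P [<-|mj].
    by rewrite coefB hqm subrr.
  by rewrite coefB (leq_sizeP _ _ sq) ?(leq_sizeP _ _ sh) ?subrr.
by rewrite -(subrK h q); apply: idealD.
Qed.

End Ideal.

Theorem noetherian_poly : noetherian {poly A}.
Proof. by move=> I hI; apply: poly_ideal_finitely_generated. Qed.

End HilbertBasis.

Lemma ex_minimal_nat (P : nat -> Prop) :
  (exists n, P n) -> exists n, P n /\ forall m, (m < n)%N -> ~ P m.
Proof.
move=> [n Pn]; apply: NNPP => nmin; elim/ltn_ind: n Pn => n IH Pn.
by apply: nmin; exists n; split=> // m mn; apply: IH.
Qed.

Section PolyCoefficients.
Variable R : comNzRingType.
Implicit Types (c e : R) (p q r : {poly R}).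

Lemma prime_ideal_coefM (P : R -> Prop) p q : prime_ideal P ->
  (forall i, P (p * q)`_i) -> (forall i, P p`_i) \/ (forall i, P q`_i).
Proof.
move=> [hP _ Pprime] Ppq.
apply: NNPP => /not_or_and [/not_all_ex_not np /not_all_ex_not nq].
have [i [pi ilt]] := ex_minimal_nat np.
have [j [qj jlt]] := ex_minimal_nat nq.
have ij : (i < (i + j).+1)%N by rewrite ltnS leq_addr.
have := Ppq (i + j)%N; rewrite coefM (bigD1 (Ordinal ij)) //= addKn => Pij.
have Prest : P (\sum_(k < (i + j).+1 | k != Ordinal ij) p`_k * q`_(i + j - k)).
  apply: ideal_sum => // k /eqP nki.
  case: (ltngtP k i) => [ki|ik|ki]; last by case: nki; apply: val_inj.
    by apply: idealMr => //; apply: NNPP; apply: ilt.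
  apply: idealMl => //; apply: NNPP; apply: jlt.
  by have := ltn_ord k; lia.
by have := idealB hP Pij Prest; rewrite addrK => /Pprime [].
Qed.

Lemma coefM_linear r c e i :
  (r * (c%:P * 'X - e%:P))`_i = (if i == 0%N then 0 else r`_i.-1) * c - r`_i * e.
Proof.
rewrite mulrBr coefB mulrA coefMX coefMC.
by case: (i == 0%N); rewrite ?mul0r // coefMC.
Qed.

Lemma polyC_divides c p : (forall i, divides c p`_i) -> divides c%:P p.
Proof.
elim/poly_ind: p => [|p d IH] cp; first by exists 0; rewrite mulr0.
have [|p' ->] := IH.
  by move=> i; have := cp i.+1; rewrite coefD coefMX coefC addr0.
have := cp 0%N; rewrite coefD coefMX coefC /= add0r => -[z ->].
by exists (p' * 'X + z%:P); rewrite mulrDr mulrA polyCM.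
Qed.

Lemma polyC_comb c e p : (forall i, exists u v, p`_i = c * u + e * v) ->
  exists U V, p = c%:P * U + e%:P * V.
Proof.
elim/poly_ind: p => [|p d IH] cp; first by exists 0, 0; rewrite !mulr0 addr0.
have [|U [V ->]] := IH.
  by move=> i; have := cp i.+1; rewrite coefD coefMX coefC addr0.
have := cp 0%N; rewrite coefD coefMX coefC /= add0r => -[u [v ->]].
exists (U * 'X + u%:P), (V * 'X + v%:P).
by rewrite !mulrDr !polyCD !polyCM !mulrA mulrDl addrACA.
Qed.

Lemma polyC_mulI c p q : is_domain R -> c <> 0 -> c%:P * p = c%:P * q -> p = q.
Proof.
by move=> dom c0 e; apply/polyP => i; apply: (domain_mulI dom c0); rewrite -!coefCM e.
Qed.

End PolyCoefficients.

Lemma divides_rmorph (R S : comNzRingType) (g : {rmorphism R -> S}) x y :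
  divides x y -> divides (g x) (g y).
Proof. by move=> [z ->]; exists (g z); rewrite rmorphM. Qed.

Lemma unitP_rmorph (R S : comNzRingType) (g : {rmorphism R -> S}) x :
  unitP x -> unitP (g x).
Proof. by move=> [y xy]; exists (g y); rewrite -rmorphM xy rmorph1. Qed.

Section Quotient.
Variables (A : comNzRingType) (a b : A).
Hypotheses (Adom : is_domain A) (a0 : a <> 0) (b0 : b <> 0).
Hypothesis coprime_ab : forall x, (divides a x /\ divides b x) <-> divides (a * b) x.
Variables (B : comNzRingType) (f : {rmorphism {poly A} -> B}).
Hypothesis f_surj : forall y, exists q, f q = y.
Hypothesis f_ker : forall q, f q = 0 <-> exists r, q = r * (a%:P * 'X - b%:P).
Implicit Types (c d p r : A) (q : {poly A}) (y z : B).

Definition fC : {rmorphism A -> B} := f \o polyC.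

Lemma fCE c : fC c = f c%:P. Proof. by []. Qed.

Lemma fC_a_X : fC a * f 'X = fC b.
Proof.
apply/eqP; rewrite !fCE -subr_eq0 -rmorphM -rmorphB; apply/eqP/f_ker.
by exists 1; rewrite mul1r.
Qed.

Lemma fC_inj : injective fC.
Proof.
move=> c d /eqP; rewrite -subr_eq0 -rmorphB => /eqP /f_ker [r e].
apply/eqP; rewrite -subr_eq0 -polyC_eq0 e; apply/eqP.
have [->|rn0] := eqVneq r 0; first by rewrite mul0r.
have := congr1 (fun q => q`_(size r)) e; rewrite /= coefC coefM_linear.
rewrite size_poly_eq0 (negbTE rn0) -lead_coefE nth_default // mul0r subr0.
by case/esym/(domain_mul_eq0 Adom) => // /eqP; rewrite lead_coef_eq0 (negbTE rn0).
Qed.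

(* Coprimality of a and b makes the class of a a non-zero-divisor in B. *)
Lemma fC_a_reg y : fC a * y = 0 -> y = 0.
Proof.
have [q <-] := f_surj y; rewrite fCE -rmorphM => /f_ker [r e].
have [r' er] : divides a%:P r.
  apply: polyC_divides => i.
  have := congr1 (fun q => q`_i) e; rewrite /= coefCM coefM_linear => ei.
  have [|z ez] := proj1 (coprime_ab (b * r`_i)); last first.
    by exists z; apply: (domain_mulI Adom b0); rewrite ez mulrA [b * a]mulrC.
  split; last exact: divides_mulIl.
  by exists ((if i == 0%N then 0 else r`_i.-1) - q`_i); rewrite mulrBr ei; ring.
apply/f_ker; exists r'; apply: (polyC_mulI Adom a0).
by rewrite e er mulrA.
Qed.

Lemma fC_a_exp_reg n y : fC a ^+ n * y = 0 -> y = 0.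
Proof.
elim: n y => [|n IH] y; first by rewrite expr0 mul1r.
by rewrite exprS -mulrA => /fC_a_reg /IH.
Qed.

Lemma fC_a_exp_neq0 n : fC a ^+ n <> 0.
Proof.
by move=> an0; move/eqP: (oner_neq0 B); apply; apply: (fC_a_exp_reg (n := n)); rewrite mulr1.
Qed.

(* B embeds in A[1/a], the class of X being b/a. *)
Lemma fC_a_exp_mul_image y : exists n c, fC a ^+ n * y = fC c.
Proof.
have [q <-] := f_surj y.
elim/poly_ind: q => [|q d [n [c IH]]]; first by exists 0%N, 0; rewrite !rmorph0 mulr0.
exists n.+1, (c * b + a ^+ n.+1 * d).
rewrite !rmorphD !rmorphM -fCE rmorphXn -IH -fC_a_X exprSr; ring.
Qed.

Lemma B_domain : is_domain B.
Proof.
split=> [|y z yz0]; first exact/eqP/oner_neq0.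
have [n [c ec]] := fC_a_exp_mul_image y.
have [m [d ed]] := fC_a_exp_mul_image z.
have : fC (c * d) = fC 0 by rewrite rmorphM -ec -ed mulrACA yz0 mulr0 rmorph0.
move=> /fC_inj /(domain_mul_eq0 Adom) [] c0; [left|right].
  by apply: (fC_a_exp_reg (n := n)); rewrite ec c0 rmorph0.
by apply: (fC_a_exp_reg (n := m)); rewrite ed c0 rmorph0.
Qed.

Lemma fC_divides c d : divides (fC c) (fC d) -> exists k, divides c (a ^+ k * d).
Proof.
move=> [y ey]; have [k [e ee]] := fC_a_exp_mul_image y.
by exists k, e; apply: fC_inj; rewrite !rmorphM rmorphXn ey mulrCA ee.
Qed.

Lemma fC_prime_not_divides_a_exp r k :
  prime_elt r -> ~ divides r a -> ~ divides (fC r) (fC a ^+ k).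
Proof.
move=> rp ra; rewrite -rmorphXn => /fC_divides [j].
by rewrite -exprD => /(prime_divides_exp rp).
Qed.

Lemma fC_divides_f p a' : a = p * a' -> forall q,
  divides (fC p) (f q) <-> forall i, exists u v, q`_i = p * u + b * v.
Proof.
move=> ea q; split.
  move=> [y ey]; have [w ew] := f_surj y.
  have [|r er] := proj1 (f_ker (q - p%:P * w)).
    by rewrite rmorphB rmorphM -fCE ew ey subrr.
  move=> i; have := congr1 (fun q => q`_i) er.
  rewrite /= coefB coefCM coefM_linear => ei.
  exists (w`_i + (if i == 0%N then 0 else r`_i.-1) * a'), (- r`_i).
  by rewrite -(subrK (p * w`_i) q`_i) ei ea; ring.
move=> /polyC_comb [U [V ->]]; exists (f U + fC a' * f 'X * f V).
by rewrite rmorphD !rmorphM -!fCE -fC_a_X ea rmorphM; ring.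
Qed.

Section PrimeFactorsOfA.
Hypothesis pb_prime : forall p, prime_elt p -> divides p a ->
  ~ (exists u v, p * u + b * v = 1) -> prime_ideal (fun x => exists u v, x = p * u + b * v).

Lemma fC_prime_divisor_a p :
  prime_elt p -> divides p a -> unitP (fC p) \/ prime_elt (fC p).
Proof.
move=> pp pa; have [a' ea] := pa.
case: (classic (exists u v, p * u + b * v = 1)) => [[u [v euv]]|nuv].
  left; exists (fC u + fC a' * f 'X * fC v).
  by rewrite mulrDr !mulrA -!rmorphM -ea fC_a_X -!rmorphM -rmorphD euv rmorph1.
have hP := pb_prime pp pa nuv; have [_ P1 _] := hP.
have divP := fC_divides_f ea.
right; split.
- by rewrite -(rmorph0 fC) => /fC_inj p0; case: pp.
- move=> /unitP_divides1; rewrite -(rmorph1 fC) fCE => /divP /(_ 0%N).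
  by rewrite coefC /= => -[u [v e1]]; apply: P1; exists u, v.
- move=> y z; have [q1 <-] := f_surj y; have [q2 <-] := f_surj z.
  by rewrite -rmorphM => /divP /(prime_ideal_coefM hP) [] /divP; [left|right].
Qed.

Lemma fC_a_prime_product :
  unitP a \/ (exists s, (forall p, p \in s -> prime_elt p) /\ a = \prod_(p <- s) p) ->
  prime_product (fC a).
Proof.
case=> [au|[s [sp ea]]]; first exact/prime_product_unit/unitP_rmorph.
rewrite ea rmorph_prod; apply: prime_product_prod => p ps.
by apply: fC_prime_divisor_a; [apply: sp|rewrite ea; apply: divides_prod_mem].
Qed.

End PrimeFactorsOfA.

Section Factoriality.
Hypothesis UFD_A : UFD A.
Hypothesis fC_a_pp : prime_product (fC a).

Lemma irreducible_divides_fC_prime (pi : B) : irreducible_elt pi ->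
  (forall x : B, prime_elt x -> ~ divides x pi) ->
  exists r, [/\ prime_elt r, ~ divides r a, divides pi (fC r) &
                exists n, divides (fC r) (fC a ^+ n * pi)].
Proof.
move=> piirr nx; have [pi0 piu _] := piirr.
have [n [c ec]] := fC_a_exp_mul_image pi.
have c0 : c <> 0.
  by move=> c0; apply: pi0; apply: (fC_a_exp_reg (n := n)); rewrite ec c0 rmorph0.
have cu : ~ unitP c.
  move=> [u cu]; apply: piu; exists (fC a ^+ n * fC u).
  by rewrite mulrA [pi * _]mulrC ec -rmorphM cu rmorph1.
have [_ factor _] := UFD_A.
have [L [Lirr eL]] := factor c c0 cu.
have Lp r : r \in L -> prime_elt r.
  by move=> rL; apply: (UFD_irreducible_prime Adom UFD_A); apply: Lirr.
case: (classic (exists2 r, r \in L & ~ divides r a)) => [[r rL ra]|nr]; last first.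
  have : divides pi (fC a ^+ size L * 1).
    have [|w ew] := divides_prod_exp (s := L) (x := a).
      by move=> r rL; apply: NNPP => ra; apply: nr; exists r.
    by exists (fC a ^+ n * fC w); rewrite mulr1 -rmorphXn ew rmorphM -eL -ec; ring.
  move/(prime_product_cancel B_domain (prime_product_exp _ fC_a_pp) nx).
  by move/unitP_divides1/piu.
pose h := fC (\prod_(s <- rem r L) s).
have erh : fC a ^+ n * pi = fC r * h.
  by rewrite ec eL (perm_big _ (perm_to_rem rL)) big_cons rmorphM.
case: (prime_product_irreducible_split B_domain (prime_product_exp n fC_a_pp) piirr erh).
  by move/(fC_prime_not_divides_a_exp (Lp r rL) ra).
move=> [w ew]; have h0 : h <> 0.
  by move=> h0; move: (@fC_a_exp_neq0 n); rewrite ew h0 mul0r.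
exists r; split=> //; [exact: Lp| |by exists n; rewrite erh; apply: divides_mulIl].
exists w; apply: (domain_mulI B_domain h0).
by rewrite [LHS]mulrC -erh ew [pi * w]mulrC mulrA.
Qed.

Lemma B_irreducible_prime (pi : B) : irreducible_elt pi -> prime_elt pi.
Proof.
move=> piirr.
case: (classic (exists2 x : B, prime_elt x & divides x pi)) => [[x xp xpi]|nx].
  exact: (irreducible_prime_divisor B_domain piirr xp xpi).
have {}nx x : prime_elt x -> ~ divides x pi by move=> xp xpi; apply: nx; exists x.
have [r [rp ra pir [n rpi]]] := irreducible_divides_fC_prime piirr nx.
have [pi0 piu _] := piirr; split=> // y z [w e].
have r_pi k x x' : fC a ^+ k * x = fC x' -> divides r x' -> divides pi x.
  move=> ex /(divides_rmorph fC); rewrite -ex => /(divides_trans pir).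
  exact: (prime_product_cancel B_domain (prime_product_exp k fC_a_pp) nx).
have [k [y' ey]] := fC_a_exp_mul_image y.
have [l [z' ez]] := fC_a_exp_mul_image z.
have : divides (fC r) (fC (a ^+ n * y' * z')).
  rewrite !rmorphM rmorphXn -ey -ez; apply: divides_trans rpi _.
  exists (fC a ^+ k * fC a ^+ l * w).
  transitivity (fC a ^+ n * fC a ^+ k * fC a ^+ l * (y * z)); first ring.
  by rewrite e; ring.
move=> /fC_divides [j]; rewrite !mulrA -exprD; have [_ _ rprime] := rp.
case/rprime => [/rprime [/(prime_divides_exp rp) //|ry]|rz]; [left|right].
  exact: (r_pi _ _ _ ey ry).
exact: (r_pi _ _ _ ez rz).
Qed.

End Factoriality.

End Quotient.

Theorem corollary3p5 (A : comNzRingType) (a b : A) :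
  noetherian A -> UFD A ->
  (* (i) *)
  a <> 0 -> b <> 0 ->
  (forall x : A, (divides a x /\ divides b x) <-> divides (a * b) x) ->
  (unitP a \/ exists s : seq A, (forall p, p \in s -> prime_elt p) /\
                                a = \prod_(p <- s) p) ->
  (* (ii) *)
  (forall p : A, prime_elt p -> divides p a ->
     ~ (exists u v : A, p * u + b * v = 1) ->
     prime_ideal (fun x : A => exists u v : A, x = p * u + b * v)) ->
  forall (B : comNzRingType) (f : {rmorphism {poly A} -> B}),
    (forall y : B, exists q : {poly A}, f q = y) ->
    (forall q : {poly A}, f q = 0 <-> exists r : {poly A}, q = r * (a%:P * 'X - b%:P)) ->
    noetherian B /\ UFD B.
Proof.
move=> noethA ufdA a0 b0 coprime a_factor pb_prime B f f_surj f_ker.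
have Adom : is_domain A by case: ufdA.
have noethB := noetherian_rmorph_surj (noetherian_poly noethA) f_surj.
have Bdom := B_domain Adom a0 b0 coprime f_surj f_ker.
have fC_a_pp := fC_a_prime_product Adom a0 f_surj f_ker pb_prime a_factor.
have irr_prime := B_irreducible_prime Adom a0 b0 coprime f_surj f_ker ufdA fC_a_pp.
by split; last exact: irreducible_prime_UFD Bdom irr_prime noethB.
Qed.
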